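(* Let $\mathcal{C}$ be a binary linear $[n,k,d]$ code, let $d^{\perp}$ denote the minimum distance of the dual code $\mathcal{C}^{\perp}$, and for $\sigma=1,\ldots,d-1$ put $$\omega_{\sigma}=\max\left\{\left\lceil \frac{n+1}{\sigma}\right\rceil-1,\; d^{\perp}\right\}.$$ Then for every $\ell$ with $1\le \ell\le d$, $$\rho_{\ell}(\mathcal{C})\;\ge\;\max\left(n-k,\;\max_{\sigma\in\{1,\ldots,\ell-1\}}\frac{\binom{n}{\sigma}}{\omega_{\sigma}\binom{n-\omega_{\sigma}}{\sigma-1}}\right).$$
   Context: Let $\mathbf{H}$ be a binary matrix with $n$ columns indexed by $J=\{0,\ldots,n-1\}$. For a nonempty $I\subseteq J$, a row of $\mathbf{H}$ is said to resolve $I$ if its restriction to the columns in $I$ has Hamming weight exactly one. A nonempty set $I\subseteq J$ is a stopping set of $\mathbf{H}$ if no row of $\mathbf{H}$ resolves $I$. The stopping distance of $\mathbf{H}$ is the minimum size of a stopping set of $\mathbf{H}$. A (possibly redundant) parity-check matrix of a binary linear code $\mathcal{C}$ of length $n$ is a binary matrix with $n$ columns whose row space equals $\mathcal{C}^{\perp}$. For $\ell\le d$, the $\ell$-th stopping redundancy $\rho_{\ell}(\mathcal{C})$ is the smallest number of rows of a (possibly redundant) parity-check matrix of $\mathcal{C}$ with stopping distance at least $\ell$. *)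

From HB Require Import structures.
From mathcomp Require Import all_boot all_order all_algebra.
Set Implicit Arguments. Unset Strict Implicit. Unset Printing Implicit Defensive.
Import Order.TTheory GRing.Theory Num.Theory.

Definition wt (n : nat) (v : 'rV['F_2]_n) : nat := #|[set j : 'I_n | v ord0 j != 0%R]|.

(* Minimum weight of a nonzero vector satisfying P (default n if there is none). *)
Definition min_dist (n : nat) (P : pred 'rV['F_2]_n) : nat :=
  \big[minn/n]_(v : 'rV['F_2]_n | P v && (v != 0%R)) wt v.

(* The code C with generator matrix G is its row space; C^perp is kermx G^T. *)
Definition in_code (k n : nat) (G : 'M['F_2]_(k, n)) : pred 'rV['F_2]_n :=
  fun v => (v <= G)%MS.
Definition in_dual (k n : nat) (G : 'M['F_2]_(k, n)) : pred 'rV['F_2]_n :=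
  fun v => (v <= kermx G^T)%MS.

(* (possibly redundant) parity-check matrix: row space equals C^perp *)
Definition is_parity_check (k n r : nat) (G : 'M['F_2]_(k, n)) (H : 'M['F_2]_(r, n)) : bool :=
  (H == kermx G^T)%MS.

Definition resolves (r n : nat) (H : 'M['F_2]_(r, n)) (i : 'I_r) (I : {set 'I_n}) : bool :=
  #|[set j in I | H i j != 0%R]| == 1.

Definition stopping_set (r n : nat) (H : 'M['F_2]_(r, n)) (I : {set 'I_n}) : bool :=
  (I != set0) && [forall i : 'I_r, ~~ resolves H i I].

Definition stopping_distance_ge (r n : nat) (H : 'M['F_2]_(r, n)) (l : nat) : Prop :=
  forall I : {set 'I_n}, stopping_set H I -> l <= #|I|.

Definition omega (n dperp s : nat) : nat :=
  maxn ((n.+1 + s - 1) %/ s - 1) dperp.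

Local Open Scope ring_scope.
Definition sigma_bound (n dperp s : nat) : rat :=
  ('C(n, s))%:R / ((omega n dperp s)%:R * ('C(n - omega n dperp s, s - 1))%:R).

(* Let H be a parity-check matrix of C with r rows and stopping distance at
   least l.  Two independent bounds on r are proved.
   - Rank: the rows of H span the dual code, of dimension n - k, so r >= n - k.
   - Counting: fix 0 < s < l.  No s-subset of the columns is a stopping set,
     so each of the 'C(n, s) such subsets is resolved by some row.  A row with
     support of size w resolves exactly the s-sets made of one support column
     and s - 1 non-support columns, at most w * 'C(n - w, s - 1) of them.
     A nonzero row lies in the dual code, so w >= dperp; and as a function of
     w the quantity w * 'C(n - w, s - 1) increases up to n %/ s and decreases
     afterwards, so on w >= dperp it is maximal at omega_s = max(n %/ s, dperp).
     Hence 'C(n, s) <= r * omega_s * 'C(n - omega_s, s - 1). *)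
From mathcomp Require Import all_boot all_order all_algebra zify.
Import Order.TTheory GRing.Theory Num.Theory.
Set Implicit Arguments. Unset Strict Implicit. Unset Printing Implicit Defensive.

(* Number of s-sets resolved by a row of weight w, as a function of w. *)
Definition resolved_bound (n s w : nat) : nat := w * 'C(n - w, s.-1).

(* Ratio of consecutive values, cleared of denominators. *)
Lemma resolved_bound_succ n s w :
  (n - w) * resolved_bound n s w.+1 = w.+1 * (n - w - s.-1) * 'C(n - w, s.-1).
Proof. by rewrite /resolved_bound subnS mulnCA mul_bin_down mulnA. Qed.

Lemma resolved_bound_up n s w : 0 < s -> s * w.+1 <= n ->
  resolved_bound n s w <= resolved_bound n s w.+1.
Proof.
move=> s_gt0 le_sw_n; have w_lt_n : w < n by nia.
rewrite -(leq_pmul2l (_ : 0 < n - w)) ?subn_gt0 // resolved_bound_succ.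
by rewrite /resolved_bound mulnCA mulnA leq_mul2r; apply/orP; right; nia.
Qed.

Lemma resolved_bound_down n s w : 0 < s -> w < n -> n < s * w.+1 ->
  resolved_bound n s w.+1 <= resolved_bound n s w.
Proof.
move=> s_gt0 w_lt_n lt_n_sw.
rewrite -(leq_pmul2l (_ : 0 < n - w)) ?subn_gt0 // resolved_bound_succ.
by rewrite /resolved_bound mulnCA mulnA leq_mul2r; apply/orP; right; nia.
Qed.

Lemma unimodal_le_peak (f : nat -> nat) (m n a w : nat) :
  (forall v, v < m -> f v <= f v.+1) ->
  (forall v, m <= v < n -> f v.+1 <= f v) ->
  a <= w <= n -> f w <= f (maxn m a).
Proof.
move=> f_up f_down /andP[le_aw le_wn].
have up : {in [pred v | v <= m] &, {homo f : u v / u <= v >-> u <= v}}.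
  apply: homo_leq_in => [//|x y z|u v|v _ lt_vm]; [exact: leq_trans| |exact: f_up].
  by rewrite !inE => ? ? k ?; rewrite inE; lia.
have down : {in [pred v | m <= v <= n] &, {homo f : u v / u <= v >-> v <= u}}.
  apply: (@homo_leq_in _ _ f (fun x y => y <= x)) => [//|x y z|u v|v].
  - lia.
  - by rewrite !inE => ? ? k ?; rewrite inE; lia.
  - by rewrite !inE => *; apply: f_down; lia.
case: (leqP w m) => [le_wm|lt_mw].
  have -> : maxn m a = m by apply/maxn_idPl; exact: leq_trans le_wm.
  by apply: up; rewrite ?inE.
by apply: down; rewrite ?inE; lia.
Qed.

Lemma omega_floor n dp s : 0 < s -> omega n dp s = maxn (n %/ s) dp.
Proof.
move=> s_gt0; rewrite /omega addSn subSS subn0.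
by rewrite divnDr ?dvdnn // divnn s_gt0 addn1 subn1.
Qed.

Lemma resolved_bound_le_omega n dp s w : 0 < s -> dp <= w <= n ->
  resolved_bound n s w <= resolved_bound n s (omega n dp s).
Proof.
move=> s_gt0 w_range; rewrite omega_floor //.
apply: unimodal_le_peak w_range => v.
  move=> lt_v_ns; apply: resolved_bound_up => //.
  by apply: leq_trans (leq_divM n s); rewrite [leqRHS]mulnC leq_mul2l lt_v_ns orbT.
move=> /andP[le_ns_v lt_vn]; apply: resolved_bound_down => //.
by apply: leq_trans (ltn_ceil n s_gt0) _; rewrite [leqRHS]mulnC leq_mul2r ltnS le_ns_v orbT.
Qed.

Lemma min_dist_le n (P : pred 'rV['F_2]_n) v : P v -> v != 0%R -> min_dist P <= wt v.
Proof.
move=> Pv nz_v; rewrite /min_dist -big_filter.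
have : v \in [seq u <- index_enum _ | P u && (u != 0%R)].
  by rewrite mem_filter Pv nz_v mem_index_enum.
elim: (filter _ _) => //= u s IH; rewrite inE big_cons => /predU1P[<-|/IH].
  exact: geq_minl.
exact: leq_trans (geq_minr _ _).
Qed.

Lemma card_bigcup_le_sum (I T : finType) (A : I -> {set T}) :
  #|\bigcup_i A i| <= \sum_i #|A i|.
Proof.
elim/big_ind2: _ => [|m1 B1 m2 B2 le1 le2|//]; first by rewrite cards0.
exact: leq_trans (leq_card_setU B1 B2) (leq_add le1 le2).
Qed.

Lemma parity_check_rows k n r (G : 'M['F_2]_(k, n)) (H : 'M['F_2]_(r, n)) :
  row_free G -> is_parity_check G H -> n - k <= r.
Proof.
move=> /eqP free_G H_pc; apply: leq_trans (rank_leq_row H).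
by rewrite (eqmx_rank H_pc) mxrank_ker mxrank_tr free_G.
Qed.

Section ResolvedSets.
Variables (r n : nat) (H : 'M['F_2]_(r, n)).

Definition row_support (i : 'I_r) : {set 'I_n} := [set j | H i j != 0%R].

Definition resolved_sets (i : 'I_r) (s : nat) : {set {set 'I_n}} :=
  [set I : {set 'I_n} | (#|I| == s) && resolves H i I].

(* A resolved s-set is one support column plus s - 1 columns off the support. *)
Lemma card_resolved_sets i s : 0 < s ->
  #|resolved_sets i s| <= resolved_bound n s #|row_support i|.
Proof.
move=> s_gt0; set S := row_support i.
set D := setX S [set A : {set 'I_n} | A \subset ~: S & #|A| == s.-1].
have card_D : #|D| = resolved_bound n s #|S|.
  rewrite /D /resolved_bound cardsX cards_draws; congr (_ * 'C(_, _)).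
  by rewrite cardsCs setCK card_ord.
rewrite -card_D /resolved_sets; apply: leq_trans (leq_imset_card (fun p => p.1 |: p.2) D).
apply/subset_leq_card/subsetP => I; rewrite inE => /andP[/eqP card_I].
rewrite /resolves => /cards1P[j0 I_S].
have : j0 \in [set j in I | H i j != 0%R] by rewrite I_S set11.
rewrite inE => /andP[j0_I j0_S].
apply/imsetP; exists (j0, I :\ j0); last by rewrite /= setD1K.
rewrite !inE j0_S /=; apply/andP; split.
  apply/subsetP => x; rewrite !inE => /andP[x_j0 x_I]; apply/negP => x_S.
  have : x \in [set j in I | H i j != 0%R] by rewrite inE x_I.
  by rewrite I_S inE (negbTE x_j0).
by move: card_I; rewrite (cardsD1 j0 I) j0_I add1n => <-.
Qed.

Lemma small_sets_resolved l s : stopping_distance_ge H l -> 0 < s < l ->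
  [set I : {set 'I_n} | #|I| == s] \subset \bigcup_i resolved_sets i s.
Proof.
move=> stop_l /andP[s_gt0 lt_sl]; apply/subsetP => I; rewrite inE => /eqP card_I.
have : ~~ stopping_set H I.
  by apply/negP => /stop_l; rewrite card_I leqNgt lt_sl.
rewrite /stopping_set -card_gt0 card_I s_gt0 /= => /forallPn[i]; rewrite negbK => res_i.
by apply/bigcupP; exists i; rewrite // inE card_I eqxx.
Qed.

(* A nonzero row of a parity-check matrix is a dual codeword, so its weight
   is at least the dual distance. *)
Lemma dual_distance_le_support k (G : 'M['F_2]_(k, n)) i :
  is_parity_check G H -> 0 < #|row_support i| ->
  min_dist (in_dual G) <= #|row_support i|.
Proof.
move=> /andP[H_sub _] /card_gt0P[j j_supp].
have -> : #|row_support i| = wt (row i H) by apply: eq_card => j'; rewrite !inE mxE.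
apply: min_dist_le; first exact: submx_trans (row_sub i H) H_sub.
by apply: contraTneq j_supp => /rowP/(_ j); rewrite !inE !mxE => ->.
Qed.

End ResolvedSets.

Lemma sigma_bound_le_rows k n r l s (G : 'M['F_2]_(k, n)) (H : 'M['F_2]_(r, n)) :
  is_parity_check G H -> stopping_distance_ge H l -> 0 < s < l ->
  (sigma_bound n (min_dist (in_dual G)) s <= r%:R)%R.
Proof.
move=> H_pc stop_l /andP[s_gt0 lt_sl].
set dp := min_dist (in_dual G); set D := resolved_bound n s (omega n dp s).
have -> : sigma_bound n dp s = ('C(n, s)%:R / D%:R)%R.
  by rewrite /sigma_bound /D /resolved_bound subn1 natrM.
have [-> | D_gt0] := posnP D; first by rewrite invr0 mulr0 ler0n.
rewrite ler_pdivrMr ?ltr0n // -natrM ler_nat.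
have row_le_D i : #|resolved_sets H i s| <= D.
  apply: leq_trans (card_resolved_sets H i s_gt0) _.
  have [-> | supp_gt0] := posnP #|row_support H i|; first by rewrite /resolved_bound.
  apply: resolved_bound_le_omega => //.
  by rewrite dual_distance_le_support // -[leqRHS]card_ord max_card.
rewrite -[X in 'C(X, _)]card_ord -card_draws.
apply: leq_trans (subset_leq_card (small_sets_resolved stop_l _)) _; first by rewrite s_gt0.
apply: leq_trans (card_bigcup_le_sum _) _.
by rewrite -[X in X * _]card_ord -sum_nat_const; apply: leq_sum => i _.
Qed.

(* The hypotheses k > 0 and l <= d only make rho_l meaningful; the bound
   itself follows from the rank and counting bounds alone. *)
Theorem theorem2 (n k : nat) (G : 'M['F_2]_(k, n)) :
  (0 < k)%N -> row_free G ->
  let d := min_dist (in_code G) in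
  let dperp := min_dist (in_dual G) in
  forall l : nat, (1 <= l <= d)%N ->
  forall (r : nat) (H : 'M['F_2]_(r, n)),
    is_parity_check G H -> stopping_distance_ge H l ->
    (Num.max ((n - k)%:R : rat)
       (\big[Num.max/0%R]_(1 <= s < l) sigma_bound n dperp s) <= r%:R)%R.
Proof.
move=> _ free_G d dperp l _ r H H_pc stop_l.
rewrite ge_max ler_nat (parity_check_rows free_G H_pc) /=.
rewrite big_nat_cond; elim/big_ind: _ => [|x y le_x le_y|s].
- exact: ler0n.
- by rewrite ge_max le_x le_y.
- by rewrite andbT => range_s; exact: sigma_bound_le_rows H_pc stop_l range_s.
Qed.
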